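(* For all real $x,u,v$, $$\sum_{m,n=0}^{\infty}H_{m,n}(x)\frac{u^m}{m!}\frac{v^n}{n!}=\exp\!\left(-u^2+(2u+v)x-uv\right).$$
   Context: For integers $m,n\ge 0$, the two-index Hermite polynomial is $H_{m,n}(x)=\left(-\frac{d}{dx}+2x\right)^m(x^n)$, i.e. the operator $f\mapsto -f'+2xf$ applied $m$ times to $x^n$. *)

From Stdlib Require Import Reals List Arith Factorial.
Open Scope R_scope.

(* Real polynomials as coefficient lists, lowest degree first:
   [c0; c1; ...; ck] represents c0 + c1 x + ... + ck x^k. *)
Definition rpoly := list R.

Definition peval (p : rpoly) (x : R) : R :=
  fold_right (fun c acc => c + x * acc) 0 p.

Fixpoint padd (p q : rpoly) : rpoly :=
  match p, q with
  | nil, _ => q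
  | _, nil => p
  | a :: p', b :: q' => (a + b) :: padd p' q'
  end.

Definition pscale (a : R) (p : rpoly) : rpoly := map (fun c => a * c) p.

Definition pmulX (p : rpoly) : rpoly := 0 :: p.

(* formal derivative: d/dx (sum c_i x^i) = sum (i+1) c_{i+1} x^i *)
Fixpoint pderiv_aux (k : nat) (p : rpoly) : rpoly :=
  match p with
  | nil => nil
  | c :: p' => (INR k * c) :: pderiv_aux (S k) p'
  end.
Definition pderiv (p : rpoly) : rpoly := pderiv_aux 1 (tl p).

Definition Hop (p : rpoly) : rpoly :=
  padd (pscale (-1) (pderiv p)) (pscale 2 (pmulX p)).

Definition pmonom (n : nat) : rpoly := repeat 0 n ++ (1 :: nil).

Definition H2 (m n : nat) : rpoly := Nat.iter m Hop (pmonom n).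

Definition H2eval (m n : nat) (x : R) : R := peval (H2 m n) x.

(* Proof outline.
   1. From the formal-derivative definition, H_{m,n}' = n H_{m,n-1} + 2m H_{m-1,n}
      (d/dx and -d/dx + 2x commute up to 2), which gives the recurrence
      H_{m+1,n} = 2x H_{m,n} - n H_{m,n-1} - 2m H_{m-1,n}.
   2. Let h_m(y) be the coefficients of exp(y u - u^2) = sum_m h_m(y) u^m/m!,
      obtained as a Cauchy product of exp(y u) and exp(-u^2); they satisfy the
      Hermite recurrence h_{m+1} = y h_m - 2m h_{m-1}.
   3. Summing the recurrence of step 1 against v^n/n! shows, by induction on m,
      that the inner series sum_n H_{m,n}(x) v^n/n! equals exp(v x) h_m(2x - v).
   4. The outer series is then exp(v x) exp((2x - v)u - u^2), which is the
      claimed exponential. *)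

From Coquelicot Require Import Coquelicot.
From Stdlib Require Import Reals List Factorial Lia Lra.
Open Scope R_scope.

Lemma peval_padd p q y : peval (padd p q) y = peval p y + peval q y.
Proof.
  revert q; induction p as [|a p IH]; intros [|b q]; simpl; try ring.
  rewrite IH; ring.
Qed.

Lemma peval_pscale a p y : peval (pscale a p) y = a * peval p y.
Proof. induction p as [|b p IH]; simpl; [ring|]. rewrite IH; ring. Qed.

Lemma peval_pmonom n y : peval (pmonom n) y = y ^ n.
Proof. induction n as [|n IH]; simpl; [ring|]. unfold pmonom in IH. rewrite IH; ring. Qed.

Lemma peval_pderiv_aux_succ k p y :
  peval (pderiv_aux (S k) p) y = peval (pderiv_aux k p) y + peval p y.
Proof.
  revert k; induction p as [|c p IH]; intros k; [simpl; ring|].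
  change (INR (S k) * c + y * peval (pderiv_aux (S (S k)) p) y
          = INR k * c + y * peval (pderiv_aux (S k) p) y + (c + y * peval p y)).
  rewrite IH, S_INR. ring.
Qed.

Lemma peval_pderiv_cons c p y :
  peval (pderiv (c :: p)) y = peval p y + y * peval (pderiv p) y.
Proof.
  unfold pderiv; destruct p as [|c' p]; simpl; [ring|].
  rewrite peval_pderiv_aux_succ. simpl. ring.
Qed.

Lemma peval_is_derive p y : is_derive (peval p) y (peval (pderiv p) y).
Proof.
  induction p as [|c p IH].
  - apply (is_derive_ext (fun _ => 0)); [reflexivity|]. auto_derive; trivial.
  - rewrite peval_pderiv_cons.
    apply (is_derive_ext (fun z => c + z * peval p z)); [reflexivity|].
    auto_derive; [exists (peval (pderiv p) y); exact IH|].
    rewrite (is_derive_unique (fun z : R => peval p z) y _ IH). ring.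
Qed.

Lemma peval_Hop p y : peval (Hop p) y = - peval (pderiv p) y + 2 * y * peval p y.
Proof. unfold Hop. rewrite peval_padd, !peval_pscale. simpl. ring. Qed.

Lemma derivative_unique (f : R -> R) (y a b : R) :
  is_derive f y a -> is_derive f y b -> a = b.
Proof.
  intros Ha Hb. rewrite <- (is_derive_unique f y a Ha). exact (is_derive_unique f y b Hb).
Qed.

(* [is_derive_ext] specialized to real functions, so that the side goals
   are equations in [R] that [ring] accepts. *)
Lemma is_derive_ext_R (f g : R -> R) (y l : R) :
  (forall z, f z = g z) -> is_derive f y l -> is_derive g y l.
Proof. apply is_derive_ext. Qed.

Lemma H2eval_zero n y : H2eval 0 n y = y ^ n.
Proof. apply peval_pmonom. Qed.

Lemma H2eval_succ m n y :
  H2eval (S m) n y = - peval (pderiv (H2 m n)) y + 2 * y * H2eval m n y.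
Proof. apply peval_Hop. Qed.

Lemma H2eval_is_derive m n y : is_derive (H2eval m n) y (peval (pderiv (H2 m n)) y).
Proof. apply peval_is_derive. Qed.

(* The defining relation read one index lower, weighted by m so that it
   also holds (trivially) for m = 0, where m - 1 truncates to 0. *)
Lemma H2_pred_deriv m n y :
  INR m * peval (pderiv (H2 (m - 1) n)) y = INR m * (2 * y * H2eval (m - 1) n y - H2eval m n y).
Proof.
  destruct m as [|m]; [simpl; ring|].
  simpl (S m - 1)%nat. rewrite Nat.sub_0_r, H2eval_succ. ring.
Qed.

(* H_{m,n}' = n H_{m,n-1} + 2m H_{m-1,n}: the commutator of d/dx with
   -d/dx + 2x is 2.  By induction on m: the induction hypothesis turns
   H_{m+1,n} = 2x H_{m,n} - H_{m,n}' into a combination of H_{m,*} and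
   H_{m-1,n}, which is differentiated term by term and then rewritten back
   with the defining relation. *)
Lemma H2_derivative m : forall n y,
  peval (pderiv (H2 m n)) y = INR n * H2eval m (n - 1) y + 2 * INR m * H2eval (m - 1) n y.
Proof.
  induction m as [|m IH]; intros n y.
  - apply (derivative_unique (H2eval 0 n) y); [apply H2eval_is_derive|].
    apply (is_derive_ext_R (fun z => z ^ n)); [intros z; symmetry; apply H2eval_zero|].
    auto_derive; [trivial|]. rewrite H2eval_zero. replace (pred n) with (n - 1)%nat by lia.
    simpl INR. ring.
  - apply (derivative_unique (H2eval (S m) n) y); [apply H2eval_is_derive|].
    apply (is_derive_ext_R (fun z => 2 * z * H2eval m n z - INR n * H2eval m (n - 1) z
                                   - 2 * INR m * H2eval (m - 1) n z)).
    { intros z. rewrite H2eval_succ, IH. ring. }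
    auto_derive; [repeat split; eexists; apply H2eval_is_derive|].
    rewrite (is_derive_unique (fun z : R => H2eval m n z) y _ (H2eval_is_derive m n y)),
      (is_derive_unique (fun z : R => H2eval m (n - 1) z) y _ (H2eval_is_derive m (n - 1) y)),
      (is_derive_unique (fun z : R => H2eval (m - 1) n z) y _ (H2eval_is_derive (m - 1) n y)).
    pose proof (H2_pred_deriv m n y) as Hpred.
    rewrite IH, H2eval_succ. simpl (S m - 1)%nat. rewrite Nat.sub_0_r, S_INR.
    (* linear in the values of H and of their derivatives, given Hpred *)
    lra.
Qed.

Lemma H2eval_recurrence m n y :
  H2eval (S m) n y
  = 2 * y * H2eval m n y - INR n * H2eval m (n - 1) y - 2 * INR m * H2eval (m - 1) n y.
Proof. rewrite H2eval_succ, H2_derivative. ring. Qed.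

Lemma is_series_Rscal (c : R) (a : nat -> R) (l : R) :
  is_series a l -> is_series (fun n => c * a n) (c * l).
Proof. exact (is_series_scal c a l). Qed.

Lemma is_series_Rplus (a b : nat -> R) (la lb : R) :
  is_series a la -> is_series b lb -> is_series (fun n => a n + b n) (la + lb).
Proof. exact (is_series_plus a b la lb). Qed.

Lemma is_series_R_ext (a b : nat -> R) (l : R) :
  (forall n, a n = b n) -> is_series a l -> is_series b l.
Proof. apply is_series_ext. Qed.

Lemma is_series_exp z : is_series (fun k => z ^ k / INR (fact k)) (exp z).
Proof.
  apply (is_series_R_ext (fun k => scal (pow_n z k) (/ INR (fact k)))); [|apply is_exp_Reals].
  intros k. rewrite pow_n_pow. reflexivity.
Qed.

Lemma is_series_drop_zero (a : nat -> R) (l : R) :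
  a O = 0 -> is_series (fun k => a (S k)) l -> is_series a l.
Proof.
  intros Ha0 H. apply is_series_decr_1.
  rewrite Ha0.
  change (is_series (fun k => a (S k)) (l + - 0)). rewrite Ropp_0, Rplus_0_r. exact H.
Qed.

(* [spread a] is the sequence a_0, 0, a_1, 0, a_2, ...: the coefficients of
   sum_k a_k t^(2k) as a power series in t. *)
Definition spread (a : nat -> R) (j : nat) : R :=
  if Nat.even j then a (Nat.div2 j) else 0.

Lemma spread_even a k : spread a (2 * k) = a k.
Proof. unfold spread. rewrite Nat.even_even, Nat.div2_double. reflexivity. Qed.

Lemma spread_odd a k : spread a (S (2 * k)) = 0.
Proof. unfold spread. replace (S (2 * k)) with (2 * k + 1)%nat by lia. now rewrite Nat.even_odd. Qed.

Lemma sum_spread_double a k :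
  sum_f_R0 (spread a) (2 * k) = sum_f_R0 a k /\ sum_f_R0 (spread a) (S (2 * k)) = sum_f_R0 a k.
Proof.
  induction k as [|k [IHeven IHodd]].
  - unfold spread; simpl. split; ring.
  - assert (Heven : sum_f_R0 (spread a) (2 * S k) = sum_f_R0 a (S k)).
    { replace (2 * S k)%nat with (S (S (2 * k))) by lia.
      rewrite tech5, IHodd. replace (S (S (2 * k))) with (2 * S k)%nat by lia.
      rewrite spread_even. reflexivity. }
    split; [exact Heven|]. rewrite tech5, Heven, spread_odd. ring.
Qed.

Lemma sum_spread a n : sum_f_R0 (spread a) n = sum_f_R0 a (Nat.div2 n).
Proof.
  destruct (Nat.Even_or_Odd n) as [[k ->] | [k ->]].
  - rewrite Nat.div2_double. apply sum_spread_double.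
  - replace (2 * k + 1)%nat with (S (2 * k)) by lia.
    rewrite Nat.div2_succ_double. apply sum_spread_double.
Qed.

Lemma is_series_spread a l : is_series a l -> is_series (spread a) l.
Proof.
  unfold is_series. intros H.
  apply (filterlim_ext (fun n => sum_n a (Nat.div2 n))).
  { intros n. rewrite !sum_n_Reals. symmetry. apply sum_spread. }
  apply (filterlim_comp _ _ _ Nat.div2 (sum_n a) _ Hierarchy.eventually); [|exact H].
  intros P [N HN]. exists (2 * N)%nat. intros n Hn. apply HN.
  apply Nat.div2_le_lower_bound. exact Hn.
Qed.

Lemma spread_mult_pow (a : nat -> R) (u : R) (j : nat) :
  spread a j * u ^ j = spread (fun k => a k * (u ^ 2) ^ k) j.
Proof.
  destruct (Nat.Even_or_Odd j) as [[k ->] | [k ->]].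
  - rewrite !spread_even, <- pow_mult. reflexivity.
  - replace (2 * k + 1)%nat with (S (2 * k)) by lia. rewrite !spread_odd. ring.
Qed.

Lemma Rabs_spread (a : nat -> R) (j : nat) :
  Rabs (spread a j) = spread (fun k => Rabs (a k)) j.
Proof. unfold spread. destruct (Nat.even j); [reflexivity | apply Rabs_R0]. Qed.

(* Coefficients of exp(y u) and exp(-u^2) in powers of u, and their
   Cauchy product: exp(y u - u^2) = sum_m hermite_coef y m u^m.  The numbers
   hermite y m = m! hermite_coef y m are the Hermite polynomials H_m(y/2). *)
Definition exp_coef (y : R) (k : nat) : R := y ^ k / INR (fact k).

Definition gauss_coef : nat -> R := spread (fun k => (-1) ^ k / INR (fact k)).

Definition hermite_coef (y : R) (m : nat) : R :=
  sum_f_R0 (fun k => exp_coef y k * gauss_coef (m - k)) m.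

Definition hermite (y : R) (m : nat) : R := INR (fact m) * hermite_coef y m.

Lemma exp_coef_succ y k : INR (S k) * exp_coef y (S k) = y * exp_coef y k.
Proof.
  unfold exp_coef. rewrite fact_simpl, mult_INR. simpl pow.
  field. split; [apply INR_fact_neq_0 | apply not_0_INR; lia].
Qed.

Lemma gauss_coef_succ_succ j : INR (S (S j)) * gauss_coef (S (S j)) = -2 * gauss_coef j.
Proof.
  unfold gauss_coef. destruct (Nat.Even_or_Odd j) as [[k ->] | [k ->]].
  - replace (S (S (2 * k))) with (2 * S k)%nat by lia. rewrite !spread_even.
    rewrite fact_simpl, !mult_INR. replace (INR 2) with 2 by (simpl; ring). simpl pow.
    field. split; [apply INR_fact_neq_0 | apply not_0_INR; lia].
  - replace (S (S (2 * k + 1))) with (S (2 * S k)) by lia.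
    replace (2 * k + 1)%nat with (S (2 * k)) by lia. rewrite !spread_odd. ring.
Qed.

(* Splitting (m+2) = k + (m+2-k) in the Cauchy product: the part weighted
   by k sees the recurrence of [exp_coef], the part weighted by m+2-k the
   recurrence of [gauss_coef] (the terms with m+2-k <= 1 vanish). *)
Lemma sum_index_weighted y N :
  sum_f_R0 (fun k => INR k * (exp_coef y k * gauss_coef (S N - k))) (S N)
  = y * hermite_coef y N.
Proof.
  rewrite decomp_sum by lia. simpl pred. rewrite Rmult_0_l, Rplus_0_l.
  unfold hermite_coef. rewrite scal_sum. apply sum_eq. intros k Hk.
  replace (S N - S k)%nat with (N - k)%nat by lia.
  rewrite <- Rmult_assoc, exp_coef_succ. ring.
Qed.

Lemma sum_coindex_weighted y m :
  sum_f_R0 (fun k => INR (S (S m) - k) * (exp_coef y k * gauss_coef (S (S m) - k))) (S (S m))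
  = -2 * hermite_coef y m.
Proof.
  rewrite !tech5, Nat.sub_diag. replace (S (S m) - S m)%nat with 1%nat by lia.
  replace (gauss_coef 1) with 0 by reflexivity.
  rewrite INR_0, Rmult_0_l, !Rmult_0_r, !Rplus_0_r.
  unfold hermite_coef. rewrite scal_sum.
  rewrite (sum_eq _ (fun k => exp_coef y k * gauss_coef (m - k) * -2)); [ring|].
  intros k Hk. replace (S (S m) - k)%nat with (S (S (m - k))) by lia.
  rewrite (Rmult_comm (exp_coef y k)), <- Rmult_assoc, gauss_coef_succ_succ. ring.
Qed.

Lemma hermite_coef_rec y m :
  (INR m + 2) * hermite_coef y (S (S m)) = y * hermite_coef y (S m) - 2 * hermite_coef y m.
Proof.
  transitivity (y * hermite_coef y (S m) + -2 * hermite_coef y m); [|ring].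
  rewrite <- sum_index_weighted, <- sum_coindex_weighted, <- plus_sum.
  unfold hermite_coef. rewrite scal_sum. apply sum_eq. intros k Hk.
  rewrite minus_INR by lia. rewrite !S_INR. ring.
Qed.

Lemma hermite_succ y m :
  hermite y (S m) = y * hermite y m - 2 * INR m * hermite y (m - 1).
Proof.
  unfold hermite. destruct m as [|m].
  - unfold hermite_coef, exp_coef, gauss_coef, spread. simpl. field.
  - simpl (S m - 1)%nat. rewrite Nat.sub_0_r.
    replace (INR (fact (S (S m))) * hermite_coef y (S (S m)))
      with (INR (fact m) * INR (S m) * ((INR m + 2) * hermite_coef y (S (S m)))).
    + rewrite hermite_coef_rec, fact_simpl, mult_INR. ring.
    + rewrite !fact_simpl, !mult_INR, !S_INR. ring.
Qed.

Lemma hermite_zero y : hermite y 0 = 1.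
Proof. unfold hermite, hermite_coef, exp_coef, gauss_coef, spread. simpl. field. Qed.

Lemma gauss_series u : is_series (fun j => gauss_coef j * u ^ j) (exp (- u ^ 2)).
Proof.
  apply (is_series_R_ext (spread (fun k => (- u ^ 2) ^ k / INR (fact k)))).
  - intros j. unfold gauss_coef. rewrite spread_mult_pow. unfold spread.
    destruct (Nat.even j); [|reflexivity].
    replace (- u ^ 2) with (-1 * u ^ 2) by ring. rewrite Rpow_mult_distr. unfold Rdiv. ring.
  - apply is_series_spread, is_series_exp.
Qed.

Lemma gauss_series_abs u : is_series (fun j => Rabs (gauss_coef j * u ^ j)) (exp (u ^ 2)).
Proof.
  apply (is_series_R_ext (spread (fun k => (u ^ 2) ^ k / INR (fact k)))).
  - intros j. unfold gauss_coef. rewrite spread_mult_pow, Rabs_spread. unfold spread.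
    destruct (Nat.even j); [|reflexivity].
    unfold Rdiv. rewrite !Rabs_mult, pow_1_abs, Rabs_inv, (Rabs_pos_eq (INR _)) by apply pos_INR.
    rewrite Rabs_pos_eq; [ring|]. apply pow_le, pow2_ge_0.
  - apply is_series_spread, is_series_exp.
Qed.

Lemma exp_coef_series y u : is_series (fun k => exp_coef y k * u ^ k) (exp (y * u)).
Proof.
  apply (is_series_R_ext (fun k => (y * u) ^ k / INR (fact k))); [|apply is_series_exp].
  intros k. unfold exp_coef. rewrite Rpow_mult_distr. unfold Rdiv. ring.
Qed.

Lemma exp_coef_series_abs y u : is_series (fun k => Rabs (exp_coef y k * u ^ k)) (exp (Rabs y * Rabs u)).
Proof.
  apply (is_series_R_ext (fun k => exp_coef (Rabs y) k * Rabs u ^ k)); [|apply exp_coef_series].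
  intros k. unfold exp_coef, Rdiv.
  rewrite !Rabs_mult, Rabs_inv, (Rabs_pos_eq (INR _)) by apply pos_INR.
  rewrite !RPow_abs. reflexivity.
Qed.

Lemma hermite_generating y u :
  is_series (fun m => hermite y m * (u ^ m / INR (fact m))) (exp (y * u - u ^ 2)).
Proof.
  pose proof (is_series_mult _ _ _ _ (exp_coef_series y u) (gauss_series u)
                (ex_intro _ _ (exp_coef_series_abs y u)) (ex_intro _ _ (gauss_series_abs u)))
    as Hcauchy.
  unfold Rminus. rewrite exp_plus. revert Hcauchy. apply is_series_R_ext. intros m.
  unfold hermite, hermite_coef.
  transitivity (sum_f_R0 (fun k => exp_coef y k * gauss_coef (m - k) * u ^ m) m).
  - apply sum_eq. intros k Hk.
    replace (u ^ m) with (u ^ k * u ^ (m - k)) by (rewrite <- pow_add; f_equal; lia).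
    ring.
  - rewrite <- scal_sum. field. apply INR_fact_neq_0.
Qed.

Lemma is_series_index_shift (f : nat -> R) (v l : R) :
  is_series (fun k => f k * (v ^ k / INR (fact k))) l ->
  is_series (fun n => INR n * f (n - 1)%nat * (v ^ n / INR (fact n))) (v * l).
Proof.
  intros H. apply is_series_drop_zero; [simpl; ring|].
  apply (is_series_R_ext (fun k => v * (f k * (v ^ k / INR (fact k))))); [|apply is_series_Rscal, H].
  intros k. simpl (S k - 1)%nat. rewrite Nat.sub_0_r, fact_simpl, mult_INR. simpl pow.
  field. split; [apply INR_fact_neq_0 | apply not_0_INR; lia].
Qed.

(* Inner sums: sum_n H_{m,n}(x) v^n/n! = exp(v x) hermite (2x - v) m.  Both
   sides obey the same three-term recurrence in m and agree for m = 0, 1. *)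
Section InnerSeries.
Variables x v : R.

Definition inner_term (m n : nat) : R := H2eval m n x * (v ^ n / INR (fact n)).

Definition inner_sum_is (m : nat) : Prop :=
  is_series (inner_term m) (exp (v * x) * hermite (2 * x - v) m).

Lemma inner_sum_zero : inner_sum_is 0.
Proof.
  unfold inner_sum_is. rewrite hermite_zero, Rmult_1_r.
  apply (is_series_R_ext (fun n => (v * x) ^ n / INR (fact n))); [|apply is_series_exp].
  intros n. unfold inner_term. rewrite H2eval_zero, Rpow_mult_distr. unfold Rdiv. ring.
Qed.

Lemma inner_sum_succ m : inner_sum_is m -> inner_sum_is (m - 1) -> inner_sum_is (S m).
Proof.
  unfold inner_sum_is. intros Hm Hpred.
  pose proof (is_series_index_shift (fun k => H2eval m k x) v _ Hm) as Hshift.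
  pose proof (is_series_Rplus _ _ _ _ (is_series_Rscal (2 * x) _ _ Hm)
               (is_series_Rplus _ _ _ _ (is_series_Rscal (-1) _ _ Hshift)
                                        (is_series_Rscal (-2 * INR m) _ _ Hpred))) as Hsum.
  replace (exp (v * x) * hermite (2 * x - v) (S m)) with
    (2 * x * (exp (v * x) * hermite (2 * x - v) m)
     + (-1 * (v * (exp (v * x) * hermite (2 * x - v) m))
        + -2 * INR m * (exp (v * x) * hermite (2 * x - v) (m - 1)))).
  - revert Hsum. apply is_series_R_ext. intros n.
    unfold inner_term. rewrite H2eval_recurrence. ring.
  - rewrite hermite_succ. ring.
Qed.

Lemma inner_sum m : inner_sum_is m.
Proof.
  enough (Hpair : forall k, inner_sum_is k /\ inner_sum_is (S k)) by apply Hpair.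
  induction k as [|k [IHk IHSk]].
  - split; [|apply inner_sum_succ]; apply inner_sum_zero.
  - split; [exact IHSk|]. apply inner_sum_succ; [exact IHSk|].
    simpl (S k - 1)%nat. rewrite Nat.sub_0_r. exact IHk.
Qed.

End InnerSeries.

Theorem mainTheorem12 (x u v : R) :
  exists A : nat -> R,
    (forall m : nat,
       infinite_sum
         (fun n : nat => H2eval m n x * (u ^ m / INR (fact m)) * (v ^ n / INR (fact n)))
         (A m)) /\
    infinite_sum A (exp (- u ^ 2 + (2 * u + v) * x - u * v)).
Proof.
  exists (fun m => exp (v * x) * hermite (2 * x - v) m * (u ^ m / INR (fact m))).
  split.
  - intros m. apply is_series_Reals.
    apply (is_series_R_ext (fun n => u ^ m / INR (fact m) * inner_term x v m n)).
    + intros n. unfold inner_term. ring.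
    + rewrite Rmult_comm. apply is_series_Rscal, inner_sum.
  - apply is_series_Reals.
    replace (exp (- u ^ 2 + (2 * u + v) * x - u * v))
      with (exp (v * x) * exp ((2 * x - v) * u - u ^ 2))
      by (rewrite <- exp_plus; f_equal; ring).
    apply (is_series_R_ext (fun m => exp (v * x) * (hermite (2 * x - v) m * (u ^ m / INR (fact m))))).
    + intros m. ring.
    + apply is_series_Rscal, hermite_generating.
Qed.
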